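(* Let $j,k$ be two settings. For each $i\in\{j,k\}$ suppose $Y^i = \theta^i D^i + f^i(X^i,A^i) + \varepsilon^i$ with $E[\varepsilon^i\mid D^i,X^i,A^i]=0$ (with $D^i$ a real-valued treatment, $X^i$ observed and $A^i$ unobserved covariates), let $\theta^i_s$ denote the short-regression parameter omitting $A^i$, and let $B^i = \theta^i_s - \theta^i$ be the omitted variable bias. Assume $B^i \in [\nu^i_l,\nu^i_u]$ for known constants $\nu^i_l\le\nu^i_u$, $i\in\{j,k\}$, and assume $B^j = \rho^{jk} B^k$ for some $\rho^{jk} \in [\rho^{jk}_l, \rho^{jk}_u]$ with known constants $0<\rho^{jk}_l\le 1$ and $\rho^{jk}_u \ge 1$. Let \[ \mathbb{C}^{jk} = \{(\rho^{jk}_l-1)\nu^k_l,\ (\rho^{jk}_u-1)\nu^k_l,\ (\rho^{jk}_l-1)\nu^k_u,\ (\rho^{jk}_u-1)\nu^k_u\}, \] $c^{jk}_l = \min \mathbb{C}^{jk}$, $c^{jk}_u = \max\mathbb{C}^{jk}$, and $\mathcal{I}^i = [\theta^i_s - \nu^i_u, \theta^i_s - \nu^i_l]$. Then the true pair $(\theta^j,\theta^k)$ belongs to \[ \mathcal{J}^{jk} = \{(\theta^j,\theta^k) : \theta^j\in\mathcal{I}^j,\ \theta^k\in\mathcal{I}^k,\ \theta^j-\theta^k \in \mathcal{I}^{jk}_D\}, \] where $\mathcal{I}^{jk}_D = [(\theta^j_s-\theta^k_s) - c^{jk}_u,\ (\theta^j_s-\theta^k_s) - c^{jk}_l]$.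
   Context: For a setting $i$, the long parameter is $\theta^i = E[Y^i\alpha^i]$ with $\alpha^i = (D^i - E[D^i\mid X^i,A^i])/E[(D^i - E[D^i\mid X^i,A^i])^2]$, and the short parameter is $\theta^i_s = E[Y^i\alpha^i_s]$ with $\alpha^i_s = (D^i - E[D^i\mid X^i])/E[(D^i - E[D^i\mid X^i])^2]$. The omitted variable bias is $B^i = \theta^i_s - \theta^i$. *)

From Stdlib Require Import Reals.
Open Scope R_scope.

Definition ovb (theta_s theta : R) : R := theta_s - theta.

Definition c_low (rho_l rho_u nu_l nu_u : R) : R :=
  Rmin (Rmin ((rho_l - 1) * nu_l) ((rho_u - 1) * nu_l))
       (Rmin ((rho_l - 1) * nu_u) ((rho_u - 1) * nu_u)).
Definition c_up (rho_l rho_u nu_l nu_u : R) : R :=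
  Rmax (Rmax ((rho_l - 1) * nu_l) ((rho_u - 1) * nu_l))
       (Rmax ((rho_l - 1) * nu_u) ((rho_u - 1) * nu_u)).

Definition I_set (theta_s nu_l nu_u : R) (t : R) : Prop :=
  theta_s - nu_u <= t <= theta_s - nu_l.

Definition ID_set (thj_s thk_s cl cu : R) (d : R) : Prop :=
  (thj_s - thk_s) - cu <= d <= (thj_s - thk_s) - cl.

Definition J_set (thj_s thk_s nuj_l nuj_u nuk_l nuk_u rho_l rho_u : R)
    (p : R * R) : Prop :=
  I_set thj_s nuj_l nuj_u (fst p) /\ I_set thk_s nuk_l nuk_u (snd p) /\
  ID_set thj_s thk_s (c_low rho_l rho_u nuk_l nuk_u) (c_up rho_l rho_u nuk_l nuk_u)
    (fst p - snd p).

(** Since [B^j = rho B^k], the difference of the biases is [B^j - B^k = (rho - 1) B^k].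
    The product [(r - 1) b] is bilinear, so on the rectangle
    [[rho_l, rho_u] x [nu^k_l, nu^k_u]] it lies between its smallest and largest
    corner values [c^jk_l] and [c^jk_u]; and [theta^j - theta^k] is
    [(theta^j_s - theta^k_s) - (B^j - B^k)]. *)

From Stdlib Require Import Reals Lra Psatz.
Open Scope R_scope.

Lemma Rmin_le_compat (a b c d : R) : a <= b -> c <= d -> Rmin a c <= Rmin b d.
Proof.
  intros Hab Hcd.
  apply Rle_trans with (Rmin b c); [apply Rle_min_compat_r | apply Rle_min_compat_l]; assumption.
Qed.

Lemma Rmax_le_compat (a b c d : R) : a <= b -> c <= d -> Rmax a c <= Rmax b d.
Proof.
  intros Hab Hcd.
  apply Rle_trans with (Rmax b c); [apply Rle_max_compat_r | apply Rle_max_compat_l]; assumption.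
Qed.

Lemma Rmult_r_between_endpoints (a b c x : R) :
  a <= x <= b -> Rmin (a * c) (b * c) <= x * c <= Rmax (a * c) (b * c).
Proof.
  intros Hx; unfold Rmin, Rmax.
  destruct (Rle_dec (a * c) (b * c)), (Rle_dec 0 c); nra.
Qed.

Lemma Rmult_l_between_endpoints (a b c x : R) :
  a <= x <= b -> Rmin (c * a) (c * b) <= c * x <= Rmax (c * a) (c * b).
Proof.
  rewrite !(Rmult_comm c).
  apply Rmult_r_between_endpoints.
Qed.

Lemma Rmult_between_corners (xl xu yl yu x y : R) :
  xl <= x <= xu -> yl <= y <= yu ->
  Rmin (Rmin (xl * yl) (xu * yl)) (Rmin (xl * yu) (xu * yu)) <= x * y <=
  Rmax (Rmax (xl * yl) (xu * yl)) (Rmax (xl * yu) (xu * yu)).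
Proof.
  intros Hx Hy.
  destruct (Rmult_l_between_endpoints yl yu x y Hy) as [Hy_min Hy_max].
  destruct (Rmult_r_between_endpoints xl xu yl x Hx) as [Hl_min Hl_max].
  destruct (Rmult_r_between_endpoints xl xu yu x Hx) as [Hu_min Hu_max].
  split.
  - apply Rle_trans with (Rmin (x * yl) (x * yu)); auto using Rmin_le_compat.
  - apply Rle_trans with (Rmax (x * yl) (x * yu)); auto using Rmax_le_compat.
Qed.

Lemma ovb_diff (thj thk thj_s thk_s rho : R) :
  ovb thj_s thj = rho * ovb thk_s thk ->
  thj - thk = (thj_s - thk_s) - (rho - 1) * ovb thk_s thk.
Proof. unfold ovb; intros; lra. Qed.

Theorem proposition2
  (thj thk thj_s thk_s : R)
  (nuj_l nuj_u nuk_l nuk_u : R)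
  (rho_l rho_u rho : R)
  (Hnuj : nuj_l <= nuj_u) (Hnuk : nuk_l <= nuk_u)
  (Hrho_l : 0 < rho_l <= 1) (Hrho_u : 1 <= rho_u)
  (HBj : nuj_l <= ovb thj_s thj <= nuj_u)
  (HBk : nuk_l <= ovb thk_s thk <= nuk_u)
  (Hrho : rho_l <= rho <= rho_u)
  (Hjk : ovb thj_s thj = rho * ovb thk_s thk) :
  J_set thj_s thk_s nuj_l nuj_u nuk_l nuk_u rho_l rho_u (thj, thk).
Proof.
  assert (Hshift : rho_l - 1 <= rho - 1 <= rho_u - 1) by lra.
  pose proof (Rmult_between_corners _ _ _ _ _ _ Hshift HBk) as Hbias.
  pose proof (ovb_diff thj thk thj_s thk_s rho Hjk) as Hdiff.
  unfold J_set, I_set, ID_set, c_low, c_up, ovb in *; simpl.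
  repeat split; lra.
Qed.
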